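(* Let $q$ be a prime power, $s,\ell$ positive integers, $\alpha,\beta\in\mathbb{F}_q^*$, $r$ the multiplicative order of $\beta$, and assume $q\equiv 1\pmod{r\ell}$. Let $\omega\in\mathbb{F}_q$ be a primitive $r\ell$-th root of unity with $\omega^\ell=\beta$, and $\eta_k(y)=\prod_{j\ne k,\,0\le j\le \ell-1}\frac{y-\omega^{1+jr}}{\omega^{1+kr}-\omega^{1+jr}}$ for $0\le k\le\ell-1$. Let $\mathcal{C}$ be an ideal (two-dimensional $(\alpha,\beta)$-constacyclic code) of $\mathcal{R}=\mathbb{F}_q[x,y]/\langle x^s-\alpha,y^\ell-\beta\rangle$, let $p_j(x)$ be the monic divisor of $x^s-\alpha$ generating the ideal $I_j=\{f(x)\in\mathbb{F}_q[x]/\langle x^s-\alpha\rangle:\eta_j(y)f(x)\in\mathcal{C}\}$, and $a_j=\deg p_j(x)$. Then $\dim_{\mathbb{F}_q}\mathcal{C}=s\ell-a_0-a_1-\cdots-a_{\ell-1}$.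
   Context: Elements of $\mathcal{R}$ are identified with $s\times\ell$ arrays over $\mathbb{F}_q$ via their coefficients of $x^iy^j$, $0\le i\le s-1$, $0\le j\le\ell-1$. *)

From HB Require Import structures.
From mathcomp Require Import all_boot all_order all_algebra.
Set Implicit Arguments. Unset Strict Implicit. Unset Printing Implicit Defensive.
Import GRing.Theory.
Local Open Scope ring_scope.

(* Bivariate polynomials F[x,y] are {poly {poly F}}: the outer variable is y,
   coefficients are polynomials in x.  Elements of
   R = F[x,y]/<x^s - alpha, y^l - beta> are s x l arrays over F
   (entry (i,k) = coefficient of x^i y^k). *)

Section TwoDim.
Variables (F : fieldType) (s l : nat) (alpha beta : F).

Definition xmod : {poly F} := 'X^s - alpha%:P.
Definition ymod : {poly {poly F}} := 'X^l - (beta%:P)%:P.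

Definition redR (P : {poly {poly F}}) : 'M[F]_(s, l) :=
  let P' := map_poly (fun c : {poly F} => c %% xmod) (P %% ymod) in
  \matrix_(i < s, k < l) (P'`_k)`_i.

Definition liftR (A : 'M[F]_(s, l)) : {poly {poly F}} :=
  \sum_(k < l) (\sum_(i < s) A i k *: 'X^i)%:P * 'X^k.

(* C is an ideal of R (C is given as an F-subspace, which every ideal is) *)
Definition is_idealR (C : {vspace 'M[F]_(s, l)}) : Prop :=
  forall (P : {poly {poly F}}) (c : 'M[F]_(s, l)),
    c \in C -> redR (P * liftR c) \in C.

End TwoDim.

Definition eta_poly (F : fieldType) (l r : nat) (w : F) (k : 'I_l) : {poly F} :=
  \prod_(j < l | j != k)
    (('X - (w ^+ (1 + j * r))%:P) * ((w ^+ (1 + k * r) - w ^+ (1 + j * r))^-1)%:P).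

From HB Require Import structures.
From mathcomp Require Import all_boot all_order all_algebra.
From mathcomp Require Import ring zify.
Set Implicit Arguments. Unset Strict Implicit. Unset Printing Implicit Defensive.
Import GRing.Theory.
Local Open Scope ring_scope.

(* The nodes theta_j = omega^(1 + j r), j < l, are l distinct roots of
   y^l - beta.  With the Lagrange basis eta_k at these nodes, every A in R is
   uniquely A = sum_k eta_k(y) A(x, theta_k), and the components are read off
   by right multiplication with the Vandermonde matrix of the nodes.  As
   eta_k(y) (y - theta_k) vanishes modulo y^l - beta, multiplying by eta_k(y)
   only sees the value at y = theta_k; hence an ideal C is the direct sum of
   the spaces eta_k(y) I_k, and eta_k(y) I_k, made of the multiples of p_k of
   degree < s, has dimension s - deg p_k. *)

Section Lagrange.
Variables (F : fieldType) (n : nat) (a : 'I_n -> F).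
Hypothesis a_inj : injective a.

Definition lagrange_basis (k : 'I_n) : {poly F} :=
  \prod_(j < n | j != k) (('X - (a j)%:P) * ((a k - a j)^-1)%:P).

Lemma horner_lagrange_basis k j : (lagrange_basis k).[a j] = (k == j)%:R.
Proof.
rewrite horner_prod; have [<-|kj] := eqVneq k j.
  apply: big1 => i ik; rewrite hornerM hornerC hornerXsubC mulfV //.
  by rewrite subr_eq0 (inj_eq a_inj) eq_sym.
by rewrite (bigD1 j) 1?eq_sym //= hornerM hornerXsubC subrr !mul0r.
Qed.

Lemma lagrange_basis_mulXsubC k :
  lagrange_basis k * ('X - (a k)%:P) =
  (\prod_(j < n | j != k) (a k - a j)^-1) *: \prod_(j < n) ('X - (a j)%:P).
Proof.
rewrite /lagrange_basis big_split -rmorph_prod /= [X in _ = _ *: X](bigD1 k) //=.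
by rewrite -mul_polyC; ring.
Qed.

Lemma lagrange_basis_neq0 k : lagrange_basis k != 0.
Proof.
apply: contra_eq_neq (horner_lagrange_basis k k) => ->.
by rewrite horner0 eqxx eq_sym oner_neq0.
Qed.

Lemma size_lagrange_basis k : (size (lagrange_basis k) <= n)%N.
Proof.
have := size_scale_leq (\prod_(j < n | j != k) (a k - a j)^-1)
  (\prod_(j < n) ('X - (a j)%:P)).
rewrite -lagrange_basis_mulXsubC size_Mmonic ?monicXsubC ?lagrange_basis_neq0 //.
by rewrite size_XsubC size_prod_XsubC [index_enum _]unlock -enumT size_enum_ord addn2.
Qed.

Lemma mul_Vandermonde_lagrange :
  Vandermonde n (\row_j a j) *m \matrix_(k, t) (lagrange_basis k)`_t = 1%:M.
Proof.
apply: mulmx1C; apply/matrixP => k j; rewrite !mxE.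
rewrite -(horner_lagrange_basis k j) (horner_coef_wide _ (size_lagrange_basis k)).
by apply: eq_bigr => t _; rewrite !mxE.
Qed.

End Lagrange.

Lemma dvdp_eqmodP (F : fieldType) (d m f : {poly F}) :
  d %| m -> (exists g, f %% m = (g * d) %% m) <-> d %| f.
Proof.
move=> dm; split=> [[g fg]|df]; last by exists (f %/ d); rewrite divpK.
by rewrite (dvdp_mod _ dm) fg -(dvdp_mod _ dm) dvdp_mull.
Qed.

Section TwoDimDecomposition.
Variables (F : fieldType) (s l : nat) (alpha beta : F) (a : 'I_l -> F).
Hypotheses (s_gt0 : (0 < s)%N) (l_gt0 : (0 < l)%N).
Hypotheses (a_inj : injective a) (a_root : forall j, a j ^+ l = beta).

Local Notation xm := (xmod s alpha).
Local Notation ym := (ymod l beta).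
Local Notation redR := (redR s l alpha beta).
Local Notation V := (Vandermonde l (\row_j a j)).
Local Notation eta k := (lagrange_basis a k).
Local Notation etaY k := (map_poly polyC (eta k)).

Lemma prod_XsubC_nodes : \prod_(j < l) ('X - (a j)%:P) = 'X^l - beta%:P.
Proof.
rewrite [RHS](@all_roots_prod_XsubC _ _ [seq a j | j <- enum 'I_l]).
- by rewrite (monicP (monicXnsubC _ l_gt0)) scale1r big_map big_enum.
- by rewrite size_XnsubC // size_map size_enum_ord.
- by apply/allP => _ /mapP[j _ ->]; rewrite /root !hornerE a_root subrr.
- by rewrite uniq_rootsE map_inj_uniq ?enum_uniq.
Qed.

Lemma etaY_mulXsubC k :
  exists c : F, etaY k * ('X - ((a k)%:P)%:P) = (c%:P)%:P * ym.
Proof.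
exists (\prod_(j < l | j != k) (a k - a j)^-1).
have := congr1 (map_poly polyC) (lagrange_basis_mulXsubC a k).
rewrite prod_XsubC_nodes -mul_polyC !rmorphM rmorphB /= map_polyX map_polyC => ->.
by rewrite map_polyC /ymod rmorphB /= map_polyXn map_polyC.
Qed.

Lemma redR_mulymodD U P : redR (U * ym + P) = redR P.
Proof.
rewrite /redR Pdiv.IdomainUnit.modpD ?modp_mull ?add0r //.
by rewrite (monicP (monicXnsubC _ l_gt0)) unitr1.
Qed.

Lemma redR_etaY_horner k P :
  redR (etaY k * P) = redR (etaY k * (P.[(a k)%:P])%:P).
Proof.
have /factor_theorem[Q PQ] : root (P - (P.[(a k)%:P])%:P) (a k)%:P.
  by rewrite /root hornerD hornerN hornerC subrr.
have [c Hc] := etaY_mulXsubC k.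
set v := (P.[(a k)%:P])%:P in PQ *.
rewrite -[P](subrK v) PQ mulrDr mulrA [etaY k * Q]mulrC -mulrA Hc.
by rewrite mulrA redR_mulymodD.
Qed.

Definition slice (A : 'M[F]_(s, l)) (k : 'I_l) : {poly F} := (liftR A).[(a k)%:P].

Lemma slice_rVpoly A k : slice A k = rVpoly (col k (A *m V))^T.
Proof.
rewrite /slice /liftR horner_sum [rVpoly _]poly_def.
under eq_bigr => t _ do rewrite hornerCM hornerXn -rmorphXn /= mulrC mul_polyC scaler_sumr.
rewrite exchange_big /=; apply: eq_bigr => i _.
rewrite valK !mxE scaler_suml; apply: eq_bigr => t _.
by rewrite scalerA !mxE mulrC.
Qed.

Lemma coef_slice A k (i : 'I_s) : (slice A k)`_i = (A *m V) i k.
Proof. by rewrite slice_rVpoly coef_rVpoly_ord !mxE. Qed.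

Lemma size_slice A k : (size (slice A k) <= s)%N.
Proof. by rewrite slice_rVpoly size_poly. Qed.

Definition etaR (k : 'I_l) (g : {poly F}) : 'M[F]_(s, l) :=
  \matrix_(i, t) (g`_i * (eta k)`_t).

Lemma etaR_is_linear k : linear (etaR k).
Proof. by move=> c g h; apply/matrixP => i t; rewrite !mxE coefD coefZ mulrDl mulrA. Qed.

HB.instance Definition _ k :=
  GRing.isLinear.Build F {poly F} 'M[F]_(s, l) *:%R (etaR k) (etaR_is_linear k).

Lemma redR_etaY k f : redR (etaY k * f%:P) = etaR k (f %% xm).
Proof.
have size_etaY : (size (etaY k * f%:P)%R < size ym)%N.
  rewrite /ymod size_XnsubC // ltnS; apply: leq_trans (size_mul_leq _ _) _.
  rewrite size_map_polyC -subn1 leq_subLR addnC.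
  exact: leq_add (size_polyC_leq1 f) (size_lagrange_basis a_inj k).
rewrite /redR modp_small //; apply/matrixP => i t.
rewrite !mxE coef_map_id0 ?mod0p // coefMC coef_map /=.
by rewrite mul_polyC modpZl coefZ mulrC.
Qed.

Lemma etaR_mulV k g (i : 'I_s) j : (etaR k g *m V) i j = g`_i * (k == j)%:R.
Proof.
rewrite !mxE; under eq_bigr do rewrite !mxE -mulrA.
rewrite -mulr_sumr -(horner_lagrange_basis a_inj k j).
by rewrite (horner_coef_wide _ (size_lagrange_basis a_inj k)).
Qed.

Lemma sum_etaR_slice A : A = \sum_(k < l) etaR k (slice A k).
Proof.
apply/matrixP => i t; rewrite summxE.
have -> : A i t = (A *m V *m \matrix_(k, t) (eta k)`_t) i t.
  by rewrite -mulmxA mul_Vandermonde_lagrange // mulmx1.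
rewrite mxE; apply: eq_bigr => k _.
by rewrite [etaR _ _ _ _]mxE [X in _ * X]mxE coef_slice.
Qed.

Lemma etaR_inj k (g h : {poly F}) :
  (size g <= s)%N -> (size h <= s)%N -> etaR k g = etaR k h -> g = h.
Proof.
move=> sg sh gh; apply/polyP => i; have [lt_is|le_si] := ltnP i s.
  have := congr1 (fun M => (M *m V) (Ordinal lt_is) k) gh.
  by rewrite /= !etaR_mulV eqxx !mulr1.
by rewrite !nth_default // (leq_trans _ le_si).
Qed.

Lemma size_rVpoly_mul (p : {poly F}) (v : 'rV_(s - (size p).-1)) :
  (size (rVpoly v * p)%R <= s)%N.
Proof.
have [->|v0] := eqVneq (rVpoly v) 0; first by rewrite mul0r size_poly0.
have sv : (size (rVpoly v) <= s - (size p).-1)%N := size_poly _ _.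
have v_gt0 : (0 < size (rVpoly v))%N by rewrite size_poly_gt0.
have := size_mul_leq (rVpoly v) p; lia.
Qed.

Definition etaR_mulp k (p : {poly F}) : 'rV_(s - (size p).-1) -> 'M[F]_(s, l) :=
  fun v => etaR k (rVpoly v * p).
Arguments etaR_mulp : clear implicits.

Lemma etaR_mulp_is_linear k (p : {poly F}) : linear (etaR_mulp k p).
Proof. by move=> c u v; rewrite /etaR_mulp linearP mulrDl -scalerAl linearP. Qed.

HB.instance Definition _ k (p : {poly F}) :=
  GRing.isLinear.Build F 'rV[F]_(s - (size p).-1) 'M[F]_(s, l) *:%R
    (etaR_mulp k p) (@etaR_mulp_is_linear k p).

Definition etaR_span k (p : {poly F}) : {vspace 'M[F]_(s, l)} :=
  (linfun (etaR_mulp k p) @: fullv)%VS.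

Lemma etaR_spanP k (p : {poly F}) x :
  x \in etaR_span k p ->
  exists2 g : {poly F}, (size g <= s)%N & p %| g /\ x = etaR k g.
Proof.
case/memv_imgP => v _ ->; rewrite lfunE.
by exists (rVpoly v * p); [exact: size_rVpoly_mul | rewrite dvdp_mull].
Qed.

Lemma etaR_in_span k p (g : {poly F}) :
  p != 0 -> (size g <= s)%N -> p %| g -> etaR k g \in etaR_span k p.
Proof.
move=> p0 sg pg; apply/memv_imgP; exists (poly_rV (g %/ p)); rewrite ?memvf //.
rewrite lfunE /= /etaR_mulp poly_rV_K ?divpK // size_divp //.
exact: leq_sub2r.
Qed.

Lemma dim_etaR_span k (p : {poly F}) :
  p != 0 -> \dim (etaR_span k p) = (s - (size p).-1)%N.
Proof.
move=> p0; rewrite limg_dim_eq; first by rewrite dimvf dim_matrix; exact: mul1n.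
rewrite capfv.
apply/eqP/lker0P => u v; rewrite !lfunE /= /etaR_mulp.
move/(etaR_inj (size_rVpoly_mul _) (size_rVpoly_mul _))/(mulIf p0).
exact: (can_inj rVpolyK).
Qed.

Lemma directv_etaR_span (p : 'I_l -> {poly F}) :
  directv (\sum_(k < l) etaR_span k (p k)).
Proof.
apply/directv_sum_independent => x x_span x_sum j _.
have [g sg [_ xj]] := etaR_spanP (x_span j isT).
have xjV0 i : (x j *m V) i j = 0.
  have := congr1 (fun M => (M *m V) i j) x_sum.
  rewrite /= mulmx_suml summxE mul0mx mxE (bigD1 j) //= big1 ?addr0 // => k kj.
  have [h _ [_ ->]] := etaR_spanP (x_span k isT).
  by rewrite etaR_mulV (negbTE kj) mulr0.
suff g0 : g = 0 by rewrite xj g0 linear0.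
apply/polyP => i; rewrite coef0; have [lt_is|le_si] := ltnP i s.
  by have := xjV0 (Ordinal lt_is); rewrite xj etaR_mulV eqxx mulr1.
by rewrite nth_default // (leq_trans sg).
Qed.

Section IdealDimension.
Variables (C : {vspace 'M[F]_(s, l)}) (p : 'I_l -> {poly F}).
Hypotheses (C_ideal : is_idealR alpha beta C) (p_neq0 : forall k, p k != 0).
Hypothesis p_dvd_xmod : forall k, p k %| xm.
Hypothesis etaY_in_C : forall k f, redR (etaY k * f%:P) \in C <-> p k %| f.

Lemma ideal_eq_sum_etaR_span : C = (\sum_(k < l) etaR_span k (p k))%VS.
Proof.
apply/eqP; rewrite eqEsubv; apply/andP; split.
  apply/subvP => A AC; rewrite (sum_etaR_slice A); apply: memv_sumr => k _.
  apply: etaR_in_span; rewrite ?size_slice //; apply/etaY_in_C.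
  by rewrite -redR_etaY_horner; exact: C_ideal.
apply/subv_sumP => k _; apply/subvP => _ /etaR_spanP[g sg [pg ->]].
have g_small : (size g < size xm)%N by rewrite /xmod size_XnsubC.
by rewrite -(modp_small g_small) -redR_etaY; apply/etaY_in_C.
Qed.

Lemma dim_ideal : \dim C = (s * l - \sum_(k < l) (size (p k)).-1)%N.
Proof.
have size_p k : ((size (p k)).-1 <= s)%N.
  have xm_neq0 : xm != 0 by rewrite -size_poly_eq0 /xmod size_XnsubC.
  have := dvdp_leq xm_neq0 (p_dvd_xmod k).
  by rewrite /xmod size_XnsubC // -subn1 leq_subLR add1n.
rewrite ideal_eq_sum_etaR_span (directvP (directv_etaR_span p)) /=.
under eq_bigr do rewrite dim_etaR_span //.
suff -> : (s * l = \sum_(k < l) (s - (size (p k)).-1) + \sum_(k < l) (size (p k)).-1)%N.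
  by rewrite addnK.
rewrite -big_split /=; under eq_bigr do rewrite subnK ?size_p //.
by rewrite sum_nat_const card_ord mulnC.
Qed.

End IdealDimension.

End TwoDimDecomposition.

Section PrimitiveRootNodes.
Variables (R : nzRingType) (r l : nat) (w : R).
Hypotheses (r_gt0 : (0 < r)%N) (w_prim : (r * l).-primitive_root w).

Lemma prim_root_nodes_inj : injective (fun j : 'I_l => w ^+ (1 + j * r)).
Proof.
have lt_rl (i : 'I_l) : (i * r < r * l)%N by rewrite mulnC ltn_pmul2l.
move=> j k /eqP; rewrite (eq_prim_root_expr w_prim) eqn_modDl.
by rewrite !modn_small ?lt_rl // eqn_pmul2r // => /eqP/val_inj.
Qed.

Lemma prim_root_nodes_expr (j : nat) : (w ^+ (1 + j * r)) ^+ l = w ^+ l.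
Proof.
rewrite -exprM mulnDl mul1n exprD (mulnC j) mulnAC exprM.
by rewrite (prim_expr_order w_prim) expr1n mulr1.
Qed.

End PrimitiveRootNodes.

Theorem mainTheorem3 (F : finFieldType) (s l r : nat) (alpha beta omega : F)
  (C : {vspace 'M[F]_(s, l)}) (p : 'I_l -> {poly F}) :
  (0 < s)%N -> (0 < l)%N ->
  alpha != 0 -> beta != 0 ->
  r.-primitive_root beta ->
  #|F| = 1 %[mod r * l] ->
  (r * l).-primitive_root omega -> omega ^+ l = beta ->
  is_idealR alpha beta C ->
  (forall j : 'I_l,
     p j \is monic /\ p j %| xmod s alpha /\
     (forall f : {poly F},
        redR s l alpha beta (map_poly polyC (eta_poly r omega j) * f%:P) \in C <->
        exists g : {poly F}, f %% xmod s alpha = (g * p j) %% xmod s alpha)) ->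
  \dim C = (s * l - \sum_(j < l) (size (p j)).-1)%N.
Proof.
(* The conditions on alpha, beta and #|F| only guarantee that omega exists. *)
move=> s_gt0 l_gt0 _ _ beta_prim _ w_prim w_l C_ideal p_spec.
have r_gt0 := prim_order_gt0 beta_prim.
apply: (dim_ideal (alpha := alpha) (a := fun j : 'I_l => omega ^+ (1 + j * r))
  s_gt0 l_gt0 _ _ C_ideal).
- exact: prim_root_nodes_inj w_prim.
- by move=> j; rewrite prim_root_nodes_expr.
- by move=> k; rewrite monic_neq0 // (p_spec k).1.
- by move=> k; have [_ []] := p_spec k.
- move=> k f; have [_ [p_dvd ->]] := p_spec k; exact: dvdp_eqmodP.
Qed.
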